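(* There exist a constant $c>0$ and infinitely many $n\in\mathbb{N}$ such that for each of them there is a connected graph $G$ on $n$ vertices and vertices $a,b\in V(G)$ such that, in the geodesic-biased random walk on $G$ with target $b$ and excited set $\mathcal{X}=\{a\}$, started at $a$ (for any choice of the fixed shortest paths), \[\mathbb{E}[\tau_a(b,\{a\})]\ \ge\ c\,\exp\left(\frac{\sqrt[4]{n}\,\log n}{100}\right).\]
   Context: Geodesic-biased random walk: let $G$ be a finite connected graph, $b\in V(G)$ a target vertex and $\mathcal{X}\subseteq V(G)$ a set of excited vertices. For every vertex $x\neq b$ fix in advance one shortest path (geodesic) in $G$ from $x$ to $b$. A walker moves in discrete time: from an unexcited vertex ($x\notin\mathcal{X}$) she moves to a uniformly random neighbour of $x$; from an excited vertex ($x\in\mathcal{X}$) she moves deterministically to the next vertex on the fixed shortest path from $x$ to $b$. $\tau_a(b,\mathcal{X})$ denotes the first time the walker started at $a$ visits $b$. *)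

From Stdlib Require Import Bool Reals List Arith.
Import ListNotations.
Open Scope R_scope.

Definition fsum (n : nat) (f : nat -> R) : R :=
  fold_right Rplus 0 (map f (seq 0 n)).

Definition simple_graph (n : nat) (adj : nat -> nat -> bool) : Prop :=
  (forall x y, adj x y = true -> (x < n)%nat /\ (y < n)%nat) /\
  (forall x y, adj x y = adj y x) /\
  (forall x, adj x x = false).

(* [walk adj x l] : x :: l is a walk in the graph (consecutive vertices adjacent).
   Its length (number of edges) is [length l] and it ends at [last l x]. *)
Fixpoint walk (adj : nat -> nat -> bool) (x : nat) (l : list nat) : Prop :=
  match l with
  | nil => True
  | y :: l' => adj x y = true /\ walk adj y l'
  end.

Definition connected (n : nat) (adj : nat -> nat -> bool) : Prop :=
  forall x y, (x < n)%nat -> (y < n)%nat ->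
    exists l, walk adj x l /\ last l x = y.

Definition geodesic (adj : nat -> nat -> bool) (x b : nat) (l : list nat) : Prop :=
  walk adj x l /\ last l x = b /\
  forall l', walk adj x l' -> last l' x = b -> (length l <= length l')%nat.

Definition geodesic_system (n : nat) (adj : nat -> nat -> bool) (b : nat)
    (gp : nat -> list nat) : Prop :=
  forall x, (x < n)%nat -> x <> b -> geodesic adj x b (gp x).

Definition deg (n : nat) (adj : nat -> nat -> bool) (x : nat) : R :=
  fsum n (fun y => if adj x y then 1 else 0).

Definition trans (n : nat) (adj : nat -> nat -> bool) (b : nat)
    (X : nat -> bool) (gp : nat -> list nat) (x y : nat) : R :=
  if X x then (if Nat.eqb y (hd b (gp x)) then 1 else 0)
  else (if adj x y then / deg n adj x else 0).

(* [surv ... t y] = P(X_t = y and tau_a(b,X) > t) for the walk started at a. *)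
Fixpoint surv (n : nat) (adj : nat -> nat -> bool) (b : nat)
    (X : nat -> bool) (gp : nat -> list nat) (a : nat) (t : nat) : nat -> R :=
  match t with
  | O => fun y => if Nat.eqb y a && negb (Nat.eqb a b) then 1 else 0
  | S t' => let q := surv n adj b X gp a t' in
      fun y => if Nat.eqb y b then 0
               else fsum n (fun x => q x * trans n adj b X gp x y)
  end.

Definition tail_prob (n : nat) (adj : nat -> nat -> bool) (b : nat)
    (X : nat -> bool) (gp : nat -> list nat) (a : nat) (t : nat) : R :=
  fsum n (surv n adj b X gp a t).

(* [expected_hitting_time ... E] : E[tau_a(b,X)] = E, via
   E[tau] = sum_{t >= 0} P(tau > t) (series converging to E). *)
Definition expected_hitting_time (n : nat) (adj : nat -> nat -> bool) (b : nat)
    (X : nat -> bool) (gp : nat -> list nat) (a : nat) (E : R) : Prop :=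
  infinite_sum (tail_prob n adj b X gp a) E.

(* The trap graph has a spine 0 - 1 - ... - k from the target b = 0 to the excited vertex a = k,
   and every inner spine vertex carries k^2 detours, paths of length k leading back to a. The
   geodesic from a runs down the spine, but from each spine vertex the walk is about k^2 times
   more likely to enter a detour, and hence to be sent back to a, than to step towards b. This is
   quantified by a potential that is 1 at a, 0 at b, and drops by at most (k+1)^-(k-1) per step in
   expectation: the walk survives t steps with probability at least 1 - t (k+1)^-(k-1), so the
   expected hitting time is at least (k+1)^(k-1)/4, while a Foster-Lyapunov function built from
   the distance to b shows it is finite. The graph has n <= k^4 vertices, and
   (k+1)^(k-1) >= exp(n^(1/4) log n / 100). *)

From Stdlib Require Import Reals List Arith Lia Lra Bool.
Import ListNotations.
Open Scope R_scope.

Lemma fsum_S n f : fsum (S n) f = fsum n f + f n.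
Proof.
  unfold fsum. rewrite seq_S, map_app, fold_right_app; simpl.
  induction (map f (seq 0 n)) as [|h t IH]; simpl; lra.
Qed.

Lemma fsum_ext n f g : (forall y, (y < n)%nat -> f y = g y) -> fsum n f = fsum n g.
Proof.
  induction n as [|n IH]; intros Hfg; [reflexivity|].
  rewrite !fsum_S, IH, Hfg; auto.
Qed.

Lemma fsum_plus n f g : fsum n (fun y => f y + g y) = fsum n f + fsum n g.
Proof. induction n as [|n IH]; [unfold fsum; simpl; lra|rewrite !fsum_S, IH; lra]. Qed.

Lemma fsum_mult_l n c f : c * fsum n f = fsum n (fun y => c * f y).
Proof. induction n as [|n IH]; [unfold fsum; simpl; lra|rewrite !fsum_S, <- IH; lra]. Qed.

Lemma fsum_const n c : fsum n (fun _ => c) = INR n * c.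
Proof. induction n as [|n IH]; [unfold fsum; simpl; lra|rewrite fsum_S, IH, S_INR; lra]. Qed.

Lemma fsum_le n f g : (forall y, (y < n)%nat -> f y <= g y) -> fsum n f <= fsum n g.
Proof.
  induction n as [|n IH]; intros Hfg; [unfold fsum; simpl; lra|rewrite !fsum_S].
  pose proof (Hfg n (Nat.lt_succ_diag_r n)).
  enough (fsum n f <= fsum n g) by lra. apply IH; intros; apply Hfg; lia.
Qed.

Lemma fsum_nonneg n f : (forall y, (y < n)%nat -> 0 <= f y) -> 0 <= fsum n f.
Proof.
  intros Hf. replace 0 with (fsum n (fun _ => 0)) by (rewrite fsum_const; lra).
  apply fsum_le; auto.
Qed.

Lemma fsum_swap n m (F : nat -> nat -> R) :
  fsum n (fun y => fsum m (fun x => F x y)) = fsum m (fun x => fsum n (fun y => F x y)).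
Proof.
  induction n as [|n IH].
  - unfold fsum at 1; simpl. rewrite (fsum_ext m _ (fun _ => 0)) by reflexivity.
    rewrite fsum_const; lra.
  - rewrite fsum_S, IH, <- fsum_plus. apply fsum_ext; intros; rewrite fsum_S; reflexivity.
Qed.

Lemma fsum_add n p f : fsum (n + p) f = fsum n f + fsum p (fun j => f (n + j)%nat).
Proof.
  induction p as [|p IH]; [rewrite Nat.add_0_r; unfold fsum at 3; simpl; lra|].
  rewrite Nat.add_succ_r, !fsum_S, IH; lra.
Qed.

Lemma fsum_indicator n z c :
  fsum n (fun y => if Nat.eqb y z then c else 0) = if Nat.ltb z n then c else 0.
Proof.
  induction n as [|n IH]; [reflexivity|]. rewrite fsum_S, IH.
  destruct (Nat.ltb_spec z n), (Nat.ltb_spec z (S n)), (Nat.eqb_spec n z); lia || lra.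
Qed.

Lemma fsum_pick n z F : (z < n)%nat -> fsum n (fun y => if Nat.eqb y z then F y else 0) = F z.
Proof.
  intros Hz. rewrite (fsum_ext n _ (fun y => if Nat.eqb y z then F z else 0)).
  - rewrite fsum_indicator. now destruct (Nat.ltb_spec z n); [|lia].
  - intros y _. destruct (Nat.eqb_spec y z); subst; reflexivity.
Qed.

Lemma fsum_interval n s m F : (s + m <= n)%nat ->
  fsum n (fun y => if (s <=? y) && (y <? s + m) then F y else 0) = fsum m (fun j => F (s + j)%nat).
Proof.
  intros Hsm. replace n with (s + m + (n - s - m))%nat by lia. rewrite !fsum_add.
  rewrite (fsum_ext s _ (fun _ => 0)), (fsum_ext (n - s - m) _ (fun _ => 0)), !fsum_const.
  - rewrite (fsum_ext m _ (fun j => F (s + j)%nat)); [lra|].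
    intros j Hj.
    destruct (Nat.leb_spec s (s + j)), (Nat.ltb_spec (s + j) (s + m)); simpl; lia || reflexivity.
  - intros y _. destruct (Nat.ltb_spec (s + m + y) (s + m)); [lia|]. now rewrite andb_false_r.
  - intros y Hy. destruct (Nat.leb_spec s y); [lia|reflexivity].
Qed.

Lemma fsum_restrict_le n (P : nat -> bool) F :
  (forall y, (y < n)%nat -> P y = false -> 0 <= F y) ->
  fsum n (fun y => if P y then F y else 0) <= fsum n F.
Proof. intros HF. apply fsum_le; intros y Hy. destruct (P y) eqn:HP; [lra|auto]. Qed.

Lemma fsum_ge_term n F z : (z < n)%nat ->
  (forall y, (y < n)%nat -> y <> z -> 0 <= F y) -> F z <= fsum n F.
Proof.
  intros Hz HF. rewrite <- (fsum_pick n z F Hz). apply fsum_restrict_le.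
  intros y Hy Hyz. apply HF; auto. now apply Nat.eqb_neq.
Qed.

Lemma fsum_ge_two_terms n F z w : (z < n)%nat -> (w < n)%nat -> z <> w ->
  (forall y, (y < n)%nat -> y <> z -> y <> w -> 0 <= F y) -> F z + F w <= fsum n F.
Proof.
  intros Hz Hw Hzw HF. rewrite <- (fsum_pick n z F Hz), <- (fsum_pick n w F Hw), <- fsum_plus.
  eapply Rle_trans; [|apply (fsum_restrict_le n (fun y => (y =? z) || (y =? w)))].
  - right; apply fsum_ext; intros y _.
    destruct (Nat.eqb_spec y z), (Nat.eqb_spec y w); simpl; lia || lra.
  - intros y Hy H. apply orb_false_iff in H as [H1 H2].
    apply HF; auto; now apply Nat.eqb_neq.
Qed.

Lemma fsum_ge_term_interval n F z s m : (z < n)%nat -> (s + m <= n)%nat ->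
  (z < s \/ s + m <= z)%nat ->
  (forall y, (y < n)%nat -> y <> z -> ~ (s <= y < s + m)%nat -> 0 <= F y) ->
  F z + fsum m (fun j => F (s + j)%nat) <= fsum n F.
Proof.
  intros Hz Hsm Hzs HF.
  rewrite <- (fsum_pick n z F Hz), <- (fsum_interval n s m F Hsm), <- fsum_plus.
  eapply Rle_trans;
    [|apply (fsum_restrict_le n (fun y => (y =? z) || ((s <=? y) && (y <? s + m))))].
  - right; apply fsum_ext; intros y _.
    destruct (Nat.eqb_spec y z), (Nat.leb_spec s y), (Nat.ltb_spec y (s + m)); simpl; lia || lra.
  - intros y Hy H. apply orb_false_iff in H as [H1 H2]. apply HF; auto.
    + now apply Nat.eqb_neq.
    + destruct (Nat.leb_spec s y), (Nat.ltb_spec y (s + m)); simpl in H2; lia || discriminate.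
Qed.

Lemma last_cons {A} (l : list A) y x : last (y :: l) x = last l y.
Proof.
  revert x y; induction l as [|z l IH]; intros x y; [reflexivity|].
  change (last (z :: l) x = last (z :: l) y). now rewrite !IH.
Qed.

Lemma last_app {A} (l1 l2 : list A) x : last (l1 ++ l2) x = last l2 (last l1 x).
Proof.
  revert x; induction l1 as [|y l1 IH]; intros x; [reflexivity|].
  rewrite <- app_comm_cons, !last_cons. apply IH.
Qed.

Lemma walk_app adj x l1 l2 : walk adj x (l1 ++ l2) <-> walk adj x l1 /\ walk adj (last l1 x) l2.
Proof.
  revert x; induction l1 as [|y l1 IH]; intros x; [simpl; tauto|].
  rewrite last_cons, <- app_comm_cons. simpl. rewrite IH. tauto.
Qed.

Definition reachable adj x y := exists l, walk adj x l /\ last l x = y.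

Lemma reachable_refl adj x : reachable adj x x.
Proof. now exists []. Qed.

Lemma reachable_trans adj x y z : reachable adj x y -> reachable adj y z -> reachable adj x z.
Proof.
  intros [l1 [W1 <-]] [l2 [W2 <-]]. exists (l1 ++ l2).
  rewrite walk_app, last_app. auto.
Qed.

Lemma reachable_edge adj x y : adj x y = true -> reachable adj x y.
Proof. intros H. exists [y]; simpl; auto. Qed.

Lemma reachable_sym adj : (forall x y, adj x y = adj y x) ->
  forall x y, reachable adj x y -> reachable adj y x.
Proof.
  intros Hsym x y [l [W E]]. revert x W E. induction l as [|z l IH]; intros x W E.
  - simpl in E; subst; apply reachable_refl.
  - destruct W as [Hxz W]. rewrite last_cons in E.
    apply reachable_trans with z; auto. apply reachable_edge. now rewrite Hsym.
Qed.

Lemma walk_length_ge_potential adj (phi : nat -> nat) b :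
  (forall x y, adj x y = true -> (phi x <= phi y + 1)%nat) -> phi b = 0%nat ->
  forall l x, walk adj x l -> last l x = b -> (phi x <= length l)%nat.
Proof.
  intros Hlip Hb l. induction l as [|z l IH]; intros x W E.
  - simpl in E; subst; simpl; lia.
  - destruct W as [Hxz W]. rewrite last_cons in E.
    specialize (IH z W E). specialize (Hlip _ _ Hxz). simpl; lia.
Qed.

(** * Hitting times from drift conditions *)

Lemma deg_nonneg n adj x : 0 <= deg n adj x.
Proof. apply fsum_nonneg. intros y _; destruct (adj x y); lra. Qed.

Lemma deg_le n adj x : deg n adj x <= INR n.
Proof.
  unfold deg. rewrite <- (Rmult_1_r (INR n)), <- fsum_const.
  apply fsum_le; intros y _; destruct (adj x y); lra.
Qed.

Lemma deg_ge_1 n adj x y : (y < n)%nat -> adj x y = true -> 1 <= deg n adj x.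
Proof.
  intros Hy Hxy. unfold deg.
  assert (H := fsum_ge_term n (fun z => if adj x z then 1 else 0) y Hy).
  cbv beta in H. rewrite Hxy in H. apply H. intros z _ _; destruct (adj x z); lra.
Qed.

Lemma neighbour_sum_affine n (adj : nat -> nat -> bool) x (f : nat -> R) c d :
  fsum n (fun y => if adj x y then c * f y + d else 0) =
  c * fsum n (fun y => if adj x y then f y else 0) + d * deg n adj x.
Proof.
  unfold deg. rewrite !fsum_mult_l, <- fsum_plus.
  apply fsum_ext; intros y _; destruct (adj x y); ring.
Qed.

(* Increments shrink by a factor [N] per level, so one step down outweighs [N] steps up. *)
Fixpoint level_potential (N : R) (top : nat) (m : nat) : R :=
  match m with O => 0 | S m' => level_potential N top m' + N ^ (top - m') end.

Lemma level_potential_mono N top m m' : 1 <= N -> (m <= m')%nat ->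
  level_potential N top m <= level_potential N top m'.
Proof.
  intros HN. induction 1; [lra|]. simpl. pose proof (pow_le N (top - m0) ltac:(lra)). lra.
Qed.

Lemma level_potential_nonneg N top m : 1 <= N -> 0 <= level_potential N top m.
Proof. intros HN. apply (level_potential_mono N top 0 m HN). lia. Qed.

Lemma infinite_sum_ge_of_tail_ge (tail : nat -> R) (B : R) (D : nat) :
  (forall t, 0 <= tail t) -> (forall t, sum_f_R0 tail t <= B) -> (1 <= D)%nat ->
  (forall t, 1 - INR t / INR D <= tail t) ->
  exists E, infinite_sum tail E /\ INR D / 4 <= E.
Proof.
  intros Hnn Hbnd HD Hlow.
  assert (Hgrow : Un_growing (sum_f_R0 tail)) by (intros t; simpl; pose proof (Hnn (S t)); lra).
  assert (Hub : has_ub (sum_f_R0 tail)) by (exists B; intros r [i ->]; apply Hbnd).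
  destruct (growing_cv _ Hgrow Hub) as [E HE]. exists E. split; [exact HE|].
  (* the first [D/2] tail terms are all at least [1/2] *)
  set (T := Nat.div2 D).
  pose proof (growing_ineq _ _ Hgrow HE T) as HET.
  assert (HD' : 1 <= INR D) by (apply (le_INR 1); auto).
  assert (HT : 2 * INR T <= INR D <= 2 * INR T + 1).
  { assert (2 * T <= D <= 2 * T + 1)%nat as [H1 H2].
    { unfold T. pose proof (Nat.div2_odd D). destruct (Nat.odd D); simpl in *; lia. }
    apply le_INR in H1, H2. rewrite mult_INR in H1. rewrite plus_INR, mult_INR in H2.
    simpl in H1, H2. lra. }
  assert (sum_f_R0 (fun _ => 1 / 2) T <= sum_f_R0 tail T).
  { apply sum_Rle. intros t Ht. eapply Rle_trans; [|apply Hlow].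
    apply le_INR in Ht. apply (Rmult_le_reg_r (INR D)); [lra|].
    replace ((1 - INR t / INR D) * INR D) with (INR D - INR t) by (field; lra). lra. }
  rewrite sum_cte, S_INR in H. lra.
Qed.

Section GeodesicBiasedWalk.

Variables (n : nat) (adj : nat -> nat -> bool) (b : nat) (X : nat -> bool)
  (gp : nat -> list nat) (a : nat).

Local Notation P := (trans n adj b X gp).
Local Notation q := (surv n adj b X gp a).
Local Notation tail := (tail_prob n adj b X gp a).

Definition step_mean (phi : nat -> R) (x : nat) : R := fsum n (fun y => P x y * phi y).

Lemma trans_nonneg x y : 0 <= P x y.
Proof.
  unfold trans. destruct (X x); [destruct (Nat.eqb y _); lra|].
  destruct (adj x y); [|lra]. destruct (Req_dec (deg n adj x) 0) as [->|Hd].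
  - rewrite Rinv_0; lra.
  - pose proof (deg_nonneg n adj x). left; apply Rinv_0_lt_compat; lra.
Qed.

Lemma trans_row_sum_le1 x : fsum n (P x) <= 1.
Proof.
  unfold trans. destruct (X x).
  - rewrite fsum_indicator. destruct (Nat.ltb _ n); lra.
  - rewrite (fsum_ext n _ (fun y => / deg n adj x * (if adj x y then 1 else 0)))
      by (intros y _; destruct (adj x y); ring).
    rewrite <- fsum_mult_l. fold (deg n adj x).
    destruct (Req_dec (deg n adj x) 0) as [->|Hd]; [rewrite Rinv_0; lra|].
    rewrite Rinv_l; lra.
Qed.

Lemma surv_nonneg t y : 0 <= q t y.
Proof.
  revert y; induction t as [|t IH]; intros y; simpl.
  - destruct (Nat.eqb y a && negb (Nat.eqb a b)); lra.
  - destruct (Nat.eqb y b); [lra|]. apply fsum_nonneg. intros x _.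
    apply Rmult_le_pos; [apply IH|apply trans_nonneg].
Qed.

Lemma surv_target t : q t b = 0.
Proof.
  destruct t; simpl; [|now rewrite Nat.eqb_refl].
  destruct (Nat.eqb_spec b a) as [->|]; [rewrite Nat.eqb_refl|]; simpl; lra.
Qed.

Lemma surv_zero_mean phi : (a < n)%nat -> a <> b -> fsum n (fun y => q 0 y * phi y) = phi a.
Proof.
  intros Ha Hab. rewrite <- (fsum_pick n a phi Ha). apply fsum_ext; intros y _; simpl.
  destruct (Nat.eqb_spec a b); [lia|]. destruct (Nat.eqb y a); simpl; lra.
Qed.

Lemma surv_succ_mean phi t : phi b = 0 ->
  fsum n (fun y => q (S t) y * phi y) = fsum n (fun x => q t x * step_mean phi x).
Proof.
  intros Hb. transitivity (fsum n (fun y => fsum n (fun x => q t x * P x y * phi y))).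
  - apply fsum_ext; intros y _; simpl. destruct (Nat.eqb_spec y b) as [->|].
    + rewrite Hb, Rmult_0_r, (fsum_ext n _ (fun _ => 0)) by (intros; ring).
      rewrite fsum_const; ring.
    + rewrite Rmult_comm, fsum_mult_l. apply fsum_ext; intros; ring.
  - rewrite fsum_swap. apply fsum_ext; intros x _. unfold step_mean.
    rewrite fsum_mult_l. apply fsum_ext; intros; ring.
Qed.

Lemma tail_prob_nonneg t : 0 <= tail t.
Proof. apply fsum_nonneg; intros y _; apply surv_nonneg. Qed.

Lemma tail_prob_le1 t : tail t <= 1.
Proof.
  induction t as [|t IH].
  - eapply Rle_trans with (fsum n (fun y => if Nat.eqb y a then 1 else 0)).
    + apply fsum_le; intros y _; simpl. destruct (Nat.eqb y a), (negb (Nat.eqb a b)); simpl; lra.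
    + rewrite fsum_indicator. destruct (Nat.ltb a n); lra.
  - (* the survival mass can only decrease, since the rows of [P] sum to at most 1 *)
    set (psi := fun y => if Nat.eqb y b then 0 else 1).
    transitivity (fsum n (fun y => q (S t) y * psi y)).
    { right. apply fsum_ext; intros y _. unfold psi.
      destruct (Nat.eqb_spec y b) as [->|]; [rewrite surv_target|]; ring. }
    rewrite surv_succ_mean by (unfold psi; now rewrite Nat.eqb_refl).
    eapply Rle_trans; [|apply IH]. apply fsum_le; intros x _.
    rewrite <- (Rmult_1_r (q t x)) at 2. apply Rmult_le_compat_l; [apply surv_nonneg|].
    eapply Rle_trans; [|apply (trans_row_sum_le1 x)]. apply fsum_le; intros y _.
    pose proof (trans_nonneg x y). unfold psi. destruct (Nat.eqb y b); nra.
Qed.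

Lemma step_mean_unexcited phi x : X x = false ->
  step_mean phi x = fsum n (fun y => if adj x y then phi y else 0) / deg n adj x.
Proof.
  intros Hx. unfold step_mean, trans. rewrite Hx, Rdiv_def, Rmult_comm, fsum_mult_l.
  apply fsum_ext; intros y _; destruct (adj x y); ring.
Qed.

Lemma step_mean_excited phi x : X x = true -> (hd b (gp x) < n)%nat ->
  step_mean phi x = phi (hd b (gp x)).
Proof.
  intros Hx Hhd. unfold step_mean, trans. rewrite Hx, <- (fsum_pick n _ phi Hhd).
  apply fsum_ext; intros y _. destruct (Nat.eqb y _); ring.
Qed.

Lemma step_mean_ge_of_neighbour_sum (u : nat -> R) delta x : X x = false -> 0 < deg n adj x ->
  0 <= fsum n (fun y => if adj x y then u y - u x + delta else 0) ->
  u x - delta <= step_mean u x.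
Proof.
  intros Hx Hd Hsum. rewrite step_mean_unexcited by auto.
  rewrite (fsum_ext n _ (fun y => if adj x y then 1 * u y + (delta - u x) else 0)),
    neighbour_sum_affine in Hsum by (intros y _; destruct (adj x y); ring).
  apply (Rmult_le_reg_r (deg n adj x)); auto.
  rewrite Rdiv_def, Rmult_assoc, Rinv_l by lra. nra.
Qed.

Lemma step_mean_le_of_neighbour_sum (w : nat -> R) A Del x : X x = false -> 0 < deg n adj x ->
  0 <= Del -> Del <= fsum n (fun y => if adj x y then A - w y else 0) ->
  step_mean w x <= A - Del / INR n.
Proof.
  intros Hx Hd HDel Hsum. rewrite step_mean_unexcited by auto.
  rewrite (fsum_ext n _ (fun y => if adj x y then -1 * w y + A else 0)),
    neighbour_sum_affine in Hsum by (intros y _; destruct (adj x y); ring).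
  assert (Del / INR n <= Del / deg n adj x).
  { apply Rmult_le_compat_l; auto. apply Rinv_le_contravar; auto. apply deg_le. }
  enough (fsum n (fun y => if adj x y then w y else 0) / deg n adj x <= A - Del / deg n adj x)
    by lra.
  apply (Rmult_le_reg_r (deg n adj x)); auto.
  unfold Rdiv. rewrite Rmult_minus_distr_r, !Rmult_assoc, Rinv_l by lra. lra.
Qed.

Lemma step_mean_level_potential_le (level : nat -> nat) top x y0 :
  X x = false -> (y0 < n)%nat -> adj x y0 = true -> (level y0 + 1 = level x)%nat ->
  (forall y, adj x y = true -> (level y <= level x + 1)%nat) -> (level x <= top)%nat ->
  step_mean (fun y => level_potential (INR n) top (level y)) x <=
  level_potential (INR n) top (level x) - / INR n.
Proof.
  intros Hx Hy0 Hxy0 Hdown Hup Htop.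
  set (N := INR n). assert (HN : 1 <= N) by (apply (le_INR 1); lia).
  set (f := level_potential N top).
  set (m := level y0). assert (Hlx : level x = S m) by lia. rewrite Hlx in Hup, Htop |- *.
  set (p := N ^ (top - S m)). assert (Hp : 1 <= p) by (apply pow_R1_Rle; lra).
  assert (Hf1 : f (S m) = f m + N * p).
  { unfold f, p; simpl. replace (top - m)%nat with (S (top - S m)) by lia. reflexivity. }
  assert (Hf : f (S (S m)) = f m + N * p + p) by (rewrite <- Hf1; reflexivity).
  eapply Rle_trans.
  - apply (step_mean_le_of_neighbour_sum _ (f (S (S m))) (f (S (S m)) - f m) x Hx).
    + pose proof (deg_ge_1 n adj x y0 Hy0 Hxy0); lra.
    + rewrite Hf; nra.
    + assert (H := fsum_ge_term n
        (fun y => if adj x y then f (S (S m)) - f (level y) else 0) y0 Hy0).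
      cbv beta in H. rewrite Hxy0 in H. apply H.
      intros y _ _. destruct (adj x y) eqn:Hxy; [|lra].
      specialize (Hup y Hxy).
      pose proof (level_potential_mono N top (level y) (S (S m)) HN ltac:(lia)).
      unfold f; lra.
  - assert (/ N <= p / N).
    { rewrite <- (Rmult_1_l (/ N)). apply Rmult_le_compat_r; [left; apply Rinv_0_lt_compat|]; lra. }
    rewrite Hf, Hf1. fold N.
    replace ((f m + N * p + p - f m) / N) with (p + p / N) by (field; lra). lra.
Qed.

Lemma tail_prob_ge_of_drift (u : nat -> R) delta : (a < n)%nat -> a <> b ->
  u b = 0 -> (forall y, (y < n)%nat -> u y <= 1) -> u a = 1 -> 0 <= delta ->
  (forall x, (x < n)%nat -> x <> b -> u x - delta <= step_mean u x) ->
  forall t, 1 - INR t * delta <= tail t.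
Proof.
  intros Ha Hab Hub Hu1 Hua Hdelta Hdrift.
  set (U := fun t => fsum n (fun y => q t y * u y)).
  assert (HU : forall t, 1 - INR t * delta <= U t).
  { induction t as [|t IH].
    - unfold U. rewrite surv_zero_mean by auto. simpl; lra.
    - assert (Hstep : fsum n (fun x => q t x * (u x - delta)) <= U (S t)).
      { unfold U. rewrite surv_succ_mean by auto. apply fsum_le; intros x Hx.
        destruct (Nat.eq_dec x b) as [->|Hxb]; [rewrite surv_target; lra|].
        apply Rmult_le_compat_l; [apply surv_nonneg|auto]. }
      rewrite (fsum_ext n _ (fun x => q t x * u x + - delta * q t x)), fsum_plus, <- fsum_mult_l
        in Hstep by (intros; ring).
      pose proof (tail_prob_le1 t). unfold tail_prob in *. fold (U t) in Hstep.
      rewrite S_INR. nra. }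
  intros t. eapply Rle_trans; [apply HU|]. apply fsum_le; intros y Hy.
  pose proof (surv_nonneg t y). pose proof (Hu1 y Hy). nra.
Qed.

Lemma tail_prob_sum_le_of_drift (w : nat -> R) eps : (a < n)%nat -> a <> b ->
  w b = 0 -> (forall y, (y < n)%nat -> 0 <= w y) -> 0 < eps ->
  (forall x, (x < n)%nat -> x <> b -> step_mean w x <= w x - eps) ->
  forall t, sum_f_R0 tail t <= w a / eps.
Proof.
  intros Ha Hab Hwb Hw Heps Hdrift.
  set (W := fun t => fsum n (fun y => q t y * w y)).
  assert (HW : forall t, 0 <= W t).
  { intros t. apply fsum_nonneg; intros y Hy. apply Rmult_le_pos; auto. apply surv_nonneg. }
  assert (Hstep : forall t, W (S t) <= W t - eps * tail t).
  { intros t. unfold W at 1. rewrite surv_succ_mean by auto.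
    eapply Rle_trans with (fsum n (fun x => q t x * w x + - eps * q t x)).
    - apply fsum_le; intros x Hx.
      destruct (Nat.eq_dec x b) as [->|Hxb]; [rewrite surv_target; lra|].
      specialize (Hdrift x Hx Hxb). pose proof (surv_nonneg t x). nra.
    - rewrite fsum_plus, <- fsum_mult_l. unfold W, tail_prob. lra. }
  (* telescoping: [W (S t) + eps * (tail 0 + ... + tail t) <= W 0 = w a] *)
  assert (Htel : forall t, W (S t) + eps * sum_f_R0 tail t <= w a).
  { induction t as [|t IH]; simpl.
    - specialize (Hstep 0%nat). unfold W at 2 in Hstep. rewrite surv_zero_mean in Hstep; auto. lra.
    - specialize (Hstep (S t)). lra. }
  intros t. specialize (Htel t). specialize (HW (S t)).
  apply (Rmult_le_reg_l eps); auto. unfold Rdiv.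
  rewrite <- Rmult_assoc, (Rmult_comm eps (w a)), Rmult_assoc, Rinv_r; lra.
Qed.

Lemma expected_hitting_time_ge (u w : nat -> R) (D : nat) eps :
  (a < n)%nat -> a <> b -> (1 <= D)%nat ->
  u b = 0 -> (forall y, (y < n)%nat -> u y <= 1) -> u a = 1 ->
  (forall x, (x < n)%nat -> x <> b -> u x - / INR D <= step_mean u x) ->
  w b = 0 -> (forall y, (y < n)%nat -> 0 <= w y) -> 0 < eps ->
  (forall x, (x < n)%nat -> x <> b -> step_mean w x <= w x - eps) ->
  exists E, expected_hitting_time n adj b X gp a E /\ INR D / 4 <= E.
Proof.
  intros Ha Hab HD Hub Hu1 Hua Hu Hwb Hw Heps Hwdrift.
  assert (HD' : 0 < INR D) by (apply lt_0_INR; lia).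
  apply (infinite_sum_ge_of_tail_ge _ (w a / eps)); auto.
  - apply tail_prob_nonneg.
  - apply tail_prob_sum_le_of_drift; auto.
  - intros t. rewrite Rdiv_def. apply (tail_prob_ge_of_drift u); auto.
    left; apply Rinv_0_lt_compat; auto.
Qed.

End GeodesicBiasedWalk.

(** * The trap graph *)

Section TrapGraph.

Local Open Scope nat_scope.

Variable k : nat.
Hypothesis k_ge2 : 2 <= k.

(* Vertices [0..k] form the spine, with target [b = 0] and excited vertex [a = k]. Every spine
   vertex [r + 1 < k] carries [k * k] detours, paths of [k - 1] new vertices leading back to [a];
   the [l]-th vertex of the [j]-th detour at [r + 1] is numbered [detour l r j]. *)
Definition layer := (k - 1) * (k * k).
Definition trap_size := k + 1 + (k - 1) * layer.
Definition detour l r j := k + 1 + l * layer + r * (k * k) + j.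
Definition detour_index l r j := l <= k - 2 /\ r <= k - 2 /\ j < k * k.

Definition is_detour x := (k + 1 <=? x) && (x <? trap_size).
Definition detour_level x := (x - (k + 1)) / layer.
Definition detour_root x := ((x - (k + 1)) mod layer) / (k * k) + 1.
Definition detour_down x := if detour_level x =? 0 then detour_root x else x - layer.

Definition trap_arc x y :=
  ((x =? y + 1) && (y <? k)) || (is_detour x && (y =? detour_down x)) ||
  (is_detour x && (detour_level x =? k - 2) && (y =? k)).
Definition trap x y := trap_arc x y || trap_arc y x.

Definition below l r j := if l =? 0 then r + 1 else detour (l - 1) r j.
Definition above l r j := if l =? k - 2 then k else detour (l + 1) r j.

Lemma detour_coordinates l r j : detour_index l r j ->
  detour_level (detour l r j) = l /\ detour_root (detour l r j) = r + 1 /\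
  is_detour (detour l r j) = true.
Proof.
  intros [Hl [Hr Hj]]. unfold detour_level, detour_root, is_detour, detour, trap_size, layer.
  replace (k + 1 + l * ((k - 1) * (k * k)) + r * (k * k) + j - (k + 1))
    with ((k - 1) * (k * k) * l + (r * (k * k) + j)) by lia.
  assert (r * (k * k) + j < (k - 1) * (k * k)) by nia.
  rewrite <- (Nat.div_unique _ _ l (r * (k * k) + j)) by lia.
  rewrite <- (Nat.mod_unique _ _ l (r * (k * k) + j)) by lia.
  rewrite <- (Nat.div_unique (r * (k * k) + j) (k * k) r j) by lia.
  repeat split. apply andb_true_intro; split; [apply Nat.leb_le|apply Nat.ltb_lt]; nia.
Qed.

Lemma detour_surj x : is_detour x = true -> exists l r j, detour_index l r j /\ x = detour l r j.
Proof.
  unfold is_detour, trap_size. intros [H1 H2]%andb_true_iff.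
  apply Nat.leb_le in H1. apply Nat.ltb_lt in H2.
  set (d := x - (k + 1)). assert (Hlay : layer <> 0) by (unfold layer; nia).
  assert (Hkk : k * k <> 0) by nia.
  exists (d / layer), ((d mod layer) / (k * k)), ((d mod layer) mod (k * k)).
  pose proof (Nat.div_mod d layer Hlay). pose proof (Nat.mod_upper_bound d layer Hlay).
  pose proof (Nat.div_mod (d mod layer) (k * k) Hkk).
  pose proof (Nat.mod_upper_bound (d mod layer) (k * k) Hkk).
  repeat split.
  - enough (d / layer < k - 1) by lia. apply Nat.Div0.div_lt_upper_bound. unfold d; lia.
  - enough (d mod layer / (k * k) < k - 1) by lia. apply Nat.Div0.div_lt_upper_bound.
    unfold layer in *; lia.
  - auto.
  - unfold detour, d in *. lia.
Qed.

Lemma detour_gt_spine l r j : k < detour l r j.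
Proof. unfold detour; lia. Qed.

Lemma detour_lt_size l r j : detour_index l r j -> detour l r j < trap_size.
Proof.
  intros Hidx. destruct (detour_coordinates l r j Hidx) as [_ [_ H]].
  apply andb_true_iff in H as [_ H]. now apply Nat.ltb_lt.
Qed.

Lemma detour_inj l r j l' r' j' : detour_index l r j -> detour_index l' r' j' ->
  detour l r j = detour l' r' j' -> l = l' /\ r = r' /\ j = j'.
Proof.
  intros Hidx Hidx' E.
  destruct (detour_coordinates l r j Hidx) as [A1 [A2 _]].
  destruct (detour_coordinates l' r' j' Hidx') as [B1 [B2 _]].
  rewrite E in A1, A2. assert (l = l') by congruence. assert (r = r') by lia.
  subst l' r'. unfold detour in E. repeat split; lia.
Qed.

Lemma is_detour_spine x : x <= k -> is_detour x = false.
Proof. intros Hx. unfold is_detour. destruct (Nat.leb_spec (k + 1) x); [lia|auto]. Qed.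

Lemma is_detour_iff x : k < x < trap_size -> is_detour x = true.
Proof.
  intros Hx. unfold is_detour.
  apply andb_true_intro; split; [apply Nat.leb_le|apply Nat.ltb_lt]; lia.
Qed.

Lemma detour_down_detour l r j : detour_index l r j -> detour_down (detour l r j) = below l r j.
Proof.
  intros Hidx. unfold detour_down, below. destruct (detour_coordinates l r j Hidx) as [-> [-> _]].
  destruct l; [reflexivity|]. unfold detour. simpl. lia.
Qed.

Lemma spine_lt_size : k < trap_size.
Proof. unfold trap_size, layer. nia. Qed.

Lemma trap_size_le : trap_size <= k ^ 4.
Proof. unfold trap_size, layer. simpl. nia. Qed.

Ltac split_bool_hyps := repeat match goal with
  | H : (_ || _)%bool = true |- _ => apply orb_true_iff in H as [H|H]
  | H : (_ && _)%bool = true |- _ => apply andb_true_iff in H as [H ?]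
  | H : (_ =? _) = true |- _ => apply Nat.eqb_eq in H
  | H : (_ <? _) = true |- _ => apply Nat.ltb_lt in H
  end.

Ltac decode_detour H :=
  let l := fresh "l" in let r := fresh "r" in let j := fresh "j" in let Hidx := fresh "Hidx" in
  destruct (detour_surj _ H) as [l [r [j [Hidx ->]]]].

Lemma below_index l r j : detour_index l r j -> 0 < l -> detour_index (l - 1) r j.
Proof. unfold detour_index; lia. Qed.

Lemma above_index l r j : detour_index l r j -> l < k - 2 -> detour_index (l + 1) r j.
Proof. unfold detour_index; lia. Qed.

Lemma trap_arc_from_spine x y : x <= k -> trap_arc x y = true -> y + 1 = x.
Proof.
  intros Hx H. unfold trap_arc in H. rewrite is_detour_spine in H by auto.
  simpl in H. rewrite !orb_false_r in H. split_bool_hyps. lia.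
Qed.

Lemma trap_arc_from_detour l r j y : detour_index l r j -> trap_arc (detour l r j) y = true ->
  y = below l r j \/ y = above l r j.
Proof.
  intros Hidx H. pose proof (detour_gt_spine l r j). unfold trap_arc in H.
  destruct (detour_coordinates l r j Hidx) as [Hl [_ Hd]].
  rewrite Hd, detour_down_detour, Hl in H by auto. split_bool_hyps; [lia|auto|].
  right. unfold above. destruct (Nat.eqb_spec l (k - 2)); lia.
Qed.

Lemma trap_arc_into_detour x l r j : detour_index l r j -> trap_arc x (detour l r j) = true ->
  l < k - 2 /\ x = above l r j.
Proof.
  intros Hidx H. pose proof (detour_gt_spine l r j). unfold trap_arc in H.
  apply orb_true_iff in H as [[H|[Hx Hdown]%andb_true_iff]%orb_true_iff|H];
    [split_bool_hyps; lia| |split_bool_hyps; lia].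
  apply Nat.eqb_eq in Hdown. decode_detour Hx. rewrite detour_down_detour in Hdown by auto.
  unfold below in Hdown. destruct (Nat.eqb_spec l0 0); [unfold detour_index in Hidx0; lia|].
  destruct (detour_inj _ _ _ _ _ _ (below_index _ _ _ Hidx0 ltac:(lia)) Hidx (eq_sym Hdown))
    as [? [-> ->]].
  unfold above, detour_index in *. destruct (Nat.eqb_spec l (k - 2)); [lia|].
  split; [lia|]. f_equal; lia.
Qed.

Lemma trap_arc_into_spine x y : y <= k -> trap_arc x y = true ->
  (y < k /\ x = y + 1) \/ (exists j, j < k * k /\ 1 <= y < k /\ x = detour 0 (y - 1) j) \/
  (y = k /\ exists r j, detour_index (k - 2) r j /\ x = detour (k - 2) r j).
Proof.
  intros Hy H. unfold trap_arc in H. split_bool_hyps; [left; lia| |].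
  - decode_detour H. rewrite detour_down_detour in H0 by auto. unfold below in H0.
    destruct (Nat.eqb_spec l 0) as [->|]; [|pose proof (detour_gt_spine (l - 1) r j); lia].
    right; left. exists j. unfold detour_index in Hidx. repeat split; try lia. f_equal; lia.
  - decode_detour H. destruct (detour_coordinates l r j Hidx) as [Hl _].
    rewrite Hl in H1. right; right. split; [auto|]. exists r, j. now subst l.
Qed.

Lemma trap_sym x y : trap x y = trap y x.
Proof. apply orb_comm. Qed.

Lemma trap_spine_edge x : 1 <= x <= k -> trap x (x - 1) = true.
Proof.
  intros Hx. unfold trap, trap_arc. rewrite (proj2 (Nat.eqb_eq x (x - 1 + 1))) by lia.
  rewrite (proj2 (Nat.ltb_lt (x - 1) k)) by lia. reflexivity.
Qed.

Lemma trap_below l r j : detour_index l r j -> trap (detour l r j) (below l r j) = true.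
Proof.
  intros Hidx. unfold trap, trap_arc. rewrite <- detour_down_detour by auto.
  destruct (detour_coordinates l r j Hidx) as [_ [_ ->]]. rewrite Nat.eqb_refl.
  now rewrite !orb_true_r.
Qed.

Lemma trap_above l r j : detour_index l r j -> trap (detour l r j) (above l r j) = true.
Proof.
  intros Hidx. unfold above. destruct (Nat.eqb_spec l (k - 2)) as [->|].
  - unfold trap, trap_arc. destruct (detour_coordinates _ r j Hidx) as [-> [_ ->]].
    now rewrite !Nat.eqb_refl, !orb_true_r.
  - assert (Hidx' := above_index l r j Hidx ltac:(unfold detour_index in *; lia)).
    rewrite trap_sym. pose proof (trap_below _ _ _ Hidx') as H. unfold below in H.
    destruct (Nat.eqb_spec (l + 1) 0); [lia|]. now replace (l + 1 - 1) with l in H by lia.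
Qed.

Lemma trap_detour_neighbours l r j y : detour_index l r j -> trap (detour l r j) y = true ->
  y = below l r j \/ y = above l r j.
Proof.
  intros Hidx H. apply orb_true_iff in H as [H|H].
  - now apply trap_arc_from_detour.
  - right. now apply trap_arc_into_detour in H.
Qed.

Lemma trap_spine_neighbours x y : 1 <= x <= k - 1 -> trap x y = true ->
  y = x - 1 \/ y = x + 1 \/ exists j, j < k * k /\ y = detour 0 (x - 1) j.
Proof.
  intros Hx H. apply orb_true_iff in H as [H|H].
  - apply trap_arc_from_spine in H; lia.
  - destruct (trap_arc_into_spine y x ltac:(lia) H) as [[_ ->]|[[j [Hj [_ ->]]]|[? _]]];
      [lia|right; right; eauto|lia].
Qed.

Lemma trap_excited_neighbours y : trap k y = true ->
  y = k - 1 \/ exists r j, detour_index (k - 2) r j /\ y = detour (k - 2) r j.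
Proof.
  intros H. apply orb_true_iff in H as [H|H].
  - apply trap_arc_from_spine in H; lia.
  - destruct (trap_arc_into_spine y k (le_n k) H) as [[? _]|[[j [_ [? _]]]|[_ ?]]]; auto; lia.
Qed.

Lemma below_lt_detour l r j : detour_index l r j -> below l r j < detour l r j.
Proof.
  intros Hidx. unfold below. pose proof (detour_gt_spine l r j).
  destruct (Nat.eqb_spec l 0); unfold detour_index, detour in *; [lia|].
  assert (0 < layer) by (unfold layer; nia). nia.
Qed.

Lemma detour_lt_above l r j : l < k - 2 -> detour l r j < above l r j.
Proof.
  intros Hl. unfold above. destruct (Nat.eqb_spec l (k - 2)); [lia|].
  unfold detour. assert (0 < layer) by (unfold layer; nia). nia.
Qed.

Lemma below_lt_size l r j : detour_index l r j -> below l r j < trap_size.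
Proof.
  intros Hidx. pose proof (below_lt_detour l r j Hidx). pose proof (detour_lt_size l r j Hidx). lia.
Qed.

Lemma above_lt_size l r j : detour_index l r j -> above l r j < trap_size.
Proof.
  intros Hidx. pose proof spine_lt_size. unfold above.
  destruct (Nat.eqb_spec l (k - 2)); [lia|]. apply detour_lt_size. apply above_index; auto.
  unfold detour_index in *; lia.
Qed.

Lemma below_ne_above l r j : detour_index l r j -> below l r j <> above l r j.
Proof.
  intros Hidx. pose proof (below_lt_detour l r j Hidx).
  destruct (Nat.eqb_spec l (k - 2)) as [->|].
  - unfold above, below. rewrite Nat.eqb_refl. destruct (Nat.eqb_spec (k - 2) 0).
    + unfold detour_index in Hidx; lia.
    + pose proof (detour_gt_spine (k - 2 - 1) r j); lia.
  - pose proof (detour_lt_above l r j ltac:(unfold detour_index in *; lia)); lia.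
Qed.

Lemma trap_arc_bounded x y : trap_arc x y = true -> x < trap_size /\ y < trap_size.
Proof.
  intros H. pose proof spine_lt_size. destruct (Nat.le_gt_cases x k) as [Hx|Hx].
  - apply trap_arc_from_spine in H; lia.
  - assert (Hd : is_detour x = true) by (unfold trap_arc in H; split_bool_hyps; auto; lia).
    decode_detour Hd. pose proof (detour_lt_size l r j Hidx).
    destruct (trap_arc_from_detour l r j y Hidx H) as [->| ->].
    + pose proof (below_lt_size l r j Hidx); lia.
    + pose proof (above_lt_size l r j Hidx); lia.
Qed.

Lemma trap_bounded x y : trap x y = true -> x < trap_size /\ y < trap_size.
Proof.
  intros [H|H]%orb_true_iff; apply trap_arc_bounded in H; lia.
Qed.

Lemma trap_irrefl x : trap x x = false.
Proof.
  unfold trap. rewrite orb_diag. destruct (trap_arc x x) eqn:H; [exfalso|reflexivity].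
  destruct (Nat.le_gt_cases x k) as [Hx|Hx].
  - apply trap_arc_from_spine in H; lia.
  - assert (Hd : is_detour x = true) by (unfold trap_arc in H; split_bool_hyps; auto; lia).
    decode_detour Hd. pose proof (below_lt_detour l r j Hidx).
    destruct (trap_arc_from_detour l r j _ Hidx H) as [E|E]; [lia|].
    unfold above in E. destruct (Nat.eqb_spec l (k - 2)).
    + pose proof (detour_gt_spine l r j); lia.
    + pose proof (detour_lt_above l r j ltac:(unfold detour_index in *; lia)).
      unfold above in *. destruct (Nat.eqb_spec l (k - 2)); lia.
Qed.

Lemma trap_simple : simple_graph trap_size trap.
Proof.
  repeat split; intros; [apply (trap_bounded x y)|apply (trap_bounded x y)|apply trap_sym|
    apply trap_irrefl]; auto.
Qed.

Lemma trap_reaches_target x : x < trap_size -> reachable trap x 0.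
Proof.
  induction x as [x IH] using lt_wf_ind. intros Hx.
  destruct (Nat.eq_dec x 0) as [->|H0]; [apply reachable_refl|].
  destruct (Nat.le_gt_cases x k) as [Hxk|Hxk].
  - apply reachable_trans with (x - 1); [apply reachable_edge, trap_spine_edge; lia|].
    apply IH; lia.
  - assert (Hd := is_detour_iff x (conj Hxk Hx)). decode_detour Hd.
    apply reachable_trans with (below l r j); [now apply reachable_edge, trap_below|].
    apply IH; [now apply below_lt_detour|now apply below_lt_size].
Qed.

Lemma trap_connected : connected trap_size trap.
Proof.
  intros x y Hx Hy. apply reachable_trans with 0; [now apply trap_reaches_target|].
  apply reachable_sym; [apply trap_sym|now apply trap_reaches_target].
Qed.

Definition dist_bound x := if x <=? k then x else Nat.max (detour_root x + 1) (detour_level x + 2).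

Lemma dist_bound_spine x : x <= k -> dist_bound x = x.
Proof. intros Hx. unfold dist_bound. destruct (Nat.leb_spec x k); lia. Qed.

Lemma dist_bound_detour l r j : detour_index l r j ->
  dist_bound (detour l r j) = Nat.max (r + 2) (l + 2).
Proof.
  intros Hidx. unfold dist_bound. pose proof (detour_gt_spine l r j).
  destruct (Nat.leb_spec (detour l r j) k); [lia|].
  destruct (detour_coordinates l r j Hidx) as [-> [-> _]]. f_equal; lia.
Qed.

Lemma dist_bound_lipschitz x y : trap x y = true -> dist_bound x <= dist_bound y + 1.
Proof.
  enough (Harc : forall x y, trap_arc x y = true ->
    dist_bound x <= dist_bound y + 1 /\ dist_bound y <= dist_bound x + 1).
  { intros [H|H]%orb_true_iff; apply Harc in H; lia. }
  clear x y. intros x y H. destruct (Nat.le_gt_cases x k) as [Hx|Hx].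
  - apply trap_arc_from_spine in H; auto. rewrite !dist_bound_spine by lia. lia.
  - assert (Hd : is_detour x = true) by (unfold trap_arc in H; split_bool_hyps; auto; lia).
    decode_detour Hd. rewrite dist_bound_detour by auto. unfold detour_index in Hidx.
    destruct (trap_arc_from_detour l r j y ltac:(auto) H) as [->| ->]; unfold below, above.
    + destruct (Nat.eqb_spec l 0).
      * rewrite dist_bound_spine by lia. lia.
      * rewrite dist_bound_detour by (unfold detour_index; lia). lia.
    + destruct (Nat.eqb_spec l (k - 2)).
      * rewrite dist_bound_spine by lia. lia.
      * rewrite dist_bound_detour by (unfold detour_index; lia). lia.
Qed.

Lemma spine_walk x : x <= k ->
  walk trap x (rev (seq 0 x)) /\ last (rev (seq 0 x)) x = 0 /\ length (rev (seq 0 x)) = x.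
Proof.
  induction x as [|x IH]; intros Hx; [simpl; auto|].
  replace (rev (seq 0 (S x))) with (x :: rev (seq 0 x)) by (now rewrite seq_S, rev_app_distr).
  destruct (IH ltac:(lia)) as [W [L N]]. repeat split.
  - replace x with (S x - 1) at 2 by lia. apply trap_spine_edge; lia.
  - exact W.
  - rewrite last_cons; auto.
  - simpl; auto.
Qed.

Lemma geodesic_first_step gp : geodesic_system trap_size trap 0 gp -> hd 0 (gp k) = k - 1.
Proof.
  intros Hgp. destruct (Hgp k spine_lt_size ltac:(lia)) as [W [L Hmin]].
  destruct (spine_walk k (le_n k)) as [W' [L' N']].
  specialize (Hmin _ W' L'). rewrite N' in Hmin.
  destruct (gp k) as [|y l]; [simpl in L; lia|].
  destruct W as [Hy Wl]. rewrite last_cons in L. simpl in Hmin |- *.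
  pose proof (walk_length_ge_potential trap dist_bound 0 dist_bound_lipschitz eq_refl l y Wl L).
  (* leaving [a] through a detour costs at least [k] further steps *)
  destruct (trap_excited_neighbours y Hy) as [->|[r [j [Hidx ->]]]]; auto.
  rewrite dist_bound_detour in H by auto. unfold detour_index in Hidx. lia.
Qed.

(** * Potentials on the trap graph *)

Local Open Scope R_scope.

Local Notation trap_mean := (step_mean trap_size trap 0 (fun x => Nat.eqb x k)).

Definition decay (r : nat) : R := / INR (k + 1) ^ r.

(* [escape] is superharmonic up to [decay (k - 1)] off [a] and [b]: it decays by the factor
   [k + 1] along the spine, which the [k * k] detours at each spine vertex compensate for,
   and is linear along each detour. *)
Definition escape (x : nat) : R :=
  if (x <? k)%nat then decay x else if (x =? k)%nat then 0
  else decay (detour_root x) * INR (k - 1 - detour_level x) / INR k.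

Lemma INR_k_pos : 0 < INR k.
Proof. apply lt_0_INR; lia. Qed.

Lemma decay_pos r : 0 < decay r.
Proof. apply Rinv_0_lt_compat, pow_lt, lt_0_INR; lia. Qed.

Lemma decay_succ r : decay r = INR (k + 1) * decay (S r).
Proof.
  unfold decay. simpl. rewrite Rinv_mult, <- Rmult_assoc, Rinv_r, Rmult_1_l; auto.
  apply not_0_INR; lia.
Qed.

Lemma decay_antitone r s : (r <= s)%nat -> decay s <= decay r.
Proof.
  induction 1 as [|s _ IH]; [lra|]. rewrite (decay_succ s) in IH.
  pose proof (decay_pos (S s)). assert (1 <= INR (k + 1)) by (apply (le_INR 1); lia). nra.
Qed.

Lemma escape_spine x : (x < k)%nat -> escape x = decay x.
Proof. intros Hx. unfold escape. destruct (Nat.ltb_spec x k); [auto|lia]. Qed.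

Lemma escape_excited : escape k = 0.
Proof. unfold escape. now rewrite Nat.ltb_irrefl, Nat.eqb_refl. Qed.

Lemma escape_detour l r j : detour_index l r j ->
  escape (detour l r j) = decay (r + 1) * INR (k - 1 - l) / INR k.
Proof.
  intros Hidx. unfold escape. pose proof (detour_gt_spine l r j).
  destruct (Nat.ltb_spec (detour l r j) k); [lia|].
  destruct (Nat.eqb_spec (detour l r j) k); [lia|].
  destruct (detour_coordinates l r j Hidx) as [-> [-> _]]. reflexivity.
Qed.

Lemma escape_nonneg x : 0 <= escape x.
Proof.
  unfold escape. pose proof INR_k_pos. pose proof (decay_pos (detour_root x)).
  pose proof (pos_INR (k - 1 - detour_level x)). pose proof (decay_pos x).
  destruct (x <? k)%nat; [lra|]. destruct (x =? k)%nat; [lra|].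
  apply Rmult_le_pos; [nra|]. left; apply Rinv_0_lt_compat; lra.
Qed.

Lemma escape_below l r j : detour_index l r j ->
  escape (below l r j) = decay (r + 1) * INR (k - l) / INR k.
Proof.
  intros Hidx. pose proof INR_k_pos. unfold below. destruct (Nat.eqb_spec l 0) as [->|].
  - unfold detour_index in Hidx. rewrite escape_spine, Nat.sub_0_r by lia. field; lra.
  - rewrite escape_detour by (apply below_index; auto; lia). do 3 f_equal. lia.
Qed.

Lemma escape_above l r j : detour_index l r j ->
  escape (above l r j) = decay (r + 1) * INR (k - 2 - l) / INR k.
Proof.
  intros Hidx. pose proof INR_k_pos. unfold above. destruct (Nat.eqb_spec l (k - 2)) as [->|].
  - rewrite escape_excited, Nat.sub_diag. simpl. field; lra.
  - rewrite escape_detour by (apply above_index; auto; unfold detour_index in Hidx; lia).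
    do 3 f_equal. lia.
Qed.

Lemma escape_neighbour_sum_spine x : (1 <= x <= k - 1)%nat ->
  0 <= fsum trap_size (fun y => if trap x y then escape x - escape y + decay (k - 1) else 0).
Proof.
  intros Hx. set (F := fun y => if trap x y then escape x - escape y + decay (k - 1) else 0).
  pose proof (decay_pos x). pose proof (decay_pos (k - 1)). pose proof INR_k_pos.
  set (s := detour 0 (x - 1) 0).
  assert (Hidx : forall j, (j < k * k)%nat -> detour_index 0 (x - 1) j)
    by (intros; unfold detour_index; lia).
  assert (Hs : forall j, (s + j = detour 0 (x - 1) j)%nat) by (intros; unfold s, detour; lia).
  assert (Hblock : (s + k * k <= trap_size)%nat).
  { assert (Hkk : (k * k - 1 < k * k)%nat) by nia.
    pose proof (detour_lt_size _ _ _ (Hidx _ Hkk)) as Hlast. rewrite <- Hs in Hlast. lia. }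
  assert (Hdown : F (x - 1)%nat = decay x - INR (k + 1) * decay x + decay (k - 1)).
  { unfold F. rewrite trap_spine_edge, !escape_spine by lia.
    rewrite (decay_succ (x - 1)). now replace (S (x - 1)) with x by lia. }
  assert (Hdetours : INR k * decay x <= fsum (k * k) (fun j => F (s + j)%nat)).
  { eapply Rle_trans; [|apply (fsum_le _ (fun _ => decay x / INR k))].
    { rewrite fsum_const, mult_INR. right; field; lra. }
    intros j Hj. unfold F. rewrite Hs.
    pose proof (trap_below 0 (x - 1) j (Hidx j Hj)) as E.
    unfold below in E. simpl in E. replace (x - 1 + 1)%nat with x in E by lia.
    rewrite trap_sym, E, escape_spine, escape_detour by (auto; lia).
    replace (x - 1 + 1)%nat with x by lia. rewrite Nat.sub_0_r, minus_INR by lia. simpl.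
    replace (decay x - decay x * (INR k - 1) / INR k) with (decay x / INR k) by (field; lra). lra. }
  assert (Hrest : forall y, (y < trap_size)%nat -> y <> (x - 1)%nat -> ~ (s <= y < s + k * k)%nat ->
    0 <= F y).
  { intros y Hy Hy1 Hys. unfold F. destruct (trap x y) eqn:Hxy; [|lra].
    destruct (trap_spine_neighbours x y Hx Hxy) as [->|[->|[j [Hj ->]]]]; [lia| |].
    - rewrite escape_spine by lia. destruct (Nat.eq_dec (x + 1) k) as [->|].
      + rewrite escape_excited. lra.
      + rewrite escape_spine by lia. pose proof (decay_antitone x (x + 1) ltac:(lia)). lra.
    - exfalso. apply Hys. rewrite <- Hs. lia. }
  pose proof spine_lt_size.
  pose proof (fsum_ge_term_interval trap_size F (x - 1) s (k * k) ltac:(lia)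
    Hblock ltac:(pose proof (detour_gt_spine 0 (x - 1) 0); unfold s; lia) Hrest).
  rewrite plus_INR in Hdown. simpl in Hdown. lra.
Qed.

Lemma escape_neighbour_sum_detour l r j : detour_index l r j ->
  0 <= fsum trap_size
    (fun y => if trap (detour l r j) y
              then escape (detour l r j) - escape y + decay (k - 1) else 0).
Proof.
  intros Hidx. set (x := detour l r j).
  pose proof (decay_pos (k - 1)). pose proof INR_k_pos.
  eapply Rle_trans; [|apply (fsum_ge_two_terms _ _ (below l r j) (above l r j))].
  - unfold x. rewrite trap_below, trap_above, escape_detour, escape_below, escape_above by auto.
    unfold detour_index in Hidx.
    replace (INR (k - l)) with (INR (k - 2 - l) + 2) by (rewrite <- (plus_INR _ 2); f_equal; lia).
    replace (INR (k - 1 - l)) with (INR (k - 2 - l) + 1) by (rewrite <- S_INR; f_equal; lia).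
    match goal with |- _ <= ?e => replace e with (2 * decay (k - 1)) by (field; lra) end. lra.
  - now apply below_lt_size.
  - now apply above_lt_size.
  - now apply below_ne_above.
  - intros y _ Hy1 Hy2. destruct (trap x y) eqn:Hxy; [|lra].
    destruct (trap_detour_neighbours l r j y Hidx Hxy); lia.
Qed.

Lemma trap_decode x : (k < x < trap_size)%nat ->
  exists l r j, detour_index l r j /\ x = detour l r j.
Proof. intros Hx. apply detour_surj, is_detour_iff, Hx. Qed.

Lemma trap_deg_pos x : (x < trap_size)%nat -> x <> 0%nat -> 0 < deg trap_size trap x.
Proof.
  intros Hx Hx0. destruct (Nat.le_gt_cases x k) as [Hxk|Hxk].
  - pose proof (deg_ge_1 trap_size trap x (x - 1) ltac:(lia) (trap_spine_edge x ltac:(lia))). lra.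
  - destruct (trap_decode x (conj Hxk Hx)) as [l [r [j [Hidx ->]]]].
    pose proof (deg_ge_1 _ _ _ _ (below_lt_size l r j Hidx) (trap_below l r j Hidx)). lra.
Qed.

Lemma decay_top : decay (k - 1) = / INR ((k + 1) ^ (k - 1)).
Proof. unfold decay. now rewrite pow_INR. Qed.

Lemma escape_drift gp : geodesic_system trap_size trap 0 gp ->
  forall x, (x < trap_size)%nat -> x <> 0%nat ->
  (1 - escape x) - decay (k - 1) <= trap_mean gp (fun y => 1 - escape y) x.
Proof.
  intros Hgp x Hx Hx0. pose proof spine_lt_size.
  destruct (Nat.eq_dec x k) as [->|Hxk].
  - rewrite step_mean_excited, geodesic_first_step, escape_excited, escape_spine by
      (auto; rewrite ?geodesic_first_step, ?Nat.eqb_refl; auto; lia). lra.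
  - apply (step_mean_ge_of_neighbour_sum _ _ _ _ gp (fun y => 1 - escape y));
      [now apply Nat.eqb_neq|now apply trap_deg_pos|].
    rewrite (fsum_ext _ _ (fun y => if trap x y then escape x - escape y + decay (k - 1) else 0))
      by (intros y _; destruct (trap x y); ring).
    destruct (Nat.le_gt_cases x k) as [Hle|Hgt].
    + apply escape_neighbour_sum_spine; lia.
    + destruct (trap_decode x (conj Hgt Hx)) as [l [r [j [Hidx ->]]]].
      now apply escape_neighbour_sum_detour.
Qed.

(* Graph distance to [b] along spine and detour edges, never passing through [a]. *)
Definition level x := if (x <=? k)%nat then x else (detour_level x + detour_root x + 1)%nat.

Lemma level_spine x : (x <= k)%nat -> level x = x.
Proof. intros Hx. unfold level. destruct (Nat.leb_spec x k); lia. Qed.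

Lemma level_detour l r j : detour_index l r j -> level (detour l r j) = (l + r + 2)%nat.
Proof.
  intros Hidx. unfold level. pose proof (detour_gt_spine l r j).
  destruct (Nat.leb_spec (detour l r j) k); [lia|].
  destruct (detour_coordinates l r j Hidx) as [-> [-> _]]. lia.
Qed.

Lemma level_below l r j : detour_index l r j ->
  (level (below l r j) + 1 = level (detour l r j))%nat.
Proof.
  intros Hidx. rewrite level_detour by auto. unfold below. destruct (Nat.eqb_spec l 0).
  - unfold detour_index in Hidx. rewrite level_spine; lia.
  - rewrite level_detour by (apply below_index; auto; lia). lia.
Qed.

Lemma level_above l r j : detour_index l r j ->
  (level (above l r j) <= level (detour l r j) + 1)%nat.
Proof.
  intros Hidx. rewrite level_detour by auto. unfold detour_index in Hidx. unfold above.
  destruct (Nat.eqb_spec l (k - 2)).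
  - rewrite level_spine; lia.
  - rewrite level_detour by (apply above_index; unfold detour_index; lia). lia.
Qed.

Definition level_weight x := level_potential (INR trap_size) (2 * k) (level x).

Lemma level_drift gp : geodesic_system trap_size trap 0 gp ->
  forall x, (x < trap_size)%nat -> x <> 0%nat ->
  trap_mean gp level_weight x <= level_weight x - / INR trap_size.
Proof.
  intros Hgp x Hx Hx0. pose proof spine_lt_size.
  assert (HN : 1 <= INR trap_size) by (apply (le_INR 1); lia).
  unfold level_weight. destruct (Nat.eq_dec x k) as [->|Hxk].
  - rewrite step_mean_excited by (rewrite ?geodesic_first_step, ?Nat.eqb_refl; auto; lia).
    rewrite geodesic_first_step, !level_spine by (auto; lia).
    set (N := INR trap_size). fold N in HN |- *.
    pose proof (eq_refl : level_potential N (2 * k) (S (k - 1)) =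
      level_potential N (2 * k) (k - 1) + N ^ (2 * k - (k - 1))) as Hsucc.
    replace (S (k - 1)) with k in Hsucc by lia.
    assert (1 <= N ^ (2 * k - (k - 1))) by (apply pow_R1_Rle; lra).
    assert (/ N <= 1) by (rewrite <- Rinv_1; apply Rinv_le_contravar; lra). lra.
  - assert (HX : Nat.eqb x k = false) by now apply Nat.eqb_neq.
    destruct (Nat.le_gt_cases x k) as [Hle|Hgt].
    + apply (step_mean_level_potential_le _ _ _ (fun z => Nat.eqb z k) _ level _ x (x - 1) HX);
        rewrite ?level_spine by lia; try lia.
      * apply trap_spine_edge; lia.
      * intros y Hy. destruct (trap_spine_neighbours x y ltac:(lia) Hy) as [->|[->|[j [Hj ->]]]].
        -- rewrite level_spine; lia.
        -- rewrite level_spine; lia.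
        -- rewrite level_detour by (unfold detour_index; lia). lia.
    + destruct (trap_decode x (conj Hgt Hx)) as [l [r [j [Hidx ->]]]].
      pose proof (level_below l r j Hidx). pose proof (level_above l r j Hidx).
      apply (step_mean_level_potential_le _ _ _ (fun z => Nat.eqb z k) _ level _ _
        (below l r j) HX); auto.
      * now apply below_lt_size.
      * now apply trap_below.
      * intros y Hy. destruct (trap_detour_neighbours l r j y Hidx Hy) as [->| ->]; lia.
      * rewrite level_detour by auto. unfold detour_index in Hidx. lia.
Qed.

Theorem trap_hitting_time_ge gp : geodesic_system trap_size trap 0 gp ->
  exists E, expected_hitting_time trap_size trap 0 (fun x => Nat.eqb x k) gp k E /\
    INR ((k + 1) ^ (k - 1)) / 4 <= E.
Proof.
  intros Hgp. pose proof spine_lt_size.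
  apply (expected_hitting_time_ge _ _ _ _ _ _ (fun y => 1 - escape y) level_weight _
    (/ INR trap_size));
    auto; try lia.
  - rewrite <- (Nat.pow_1_l (k - 1)) at 1. apply Nat.pow_le_mono_l; lia.
  - rewrite escape_spine by lia. unfold decay. simpl. lra.
  - intros y _. pose proof (escape_nonneg y). lra.
  - rewrite escape_excited. lra.
  - intros x Hx Hx0. rewrite <- decay_top. now apply escape_drift.
  - intros y _. apply level_potential_nonneg, (le_INR 1). lia.
  - apply Rinv_0_lt_compat, lt_0_INR. lia.
  - now apply level_drift.
Qed.

End TrapGraph.

Lemma exp_le_compat x y : x <= y -> exp x <= exp y.
Proof. intros [H| ->]; [left; now apply exp_increasing|lra]. Qed.

Lemma ln_le_compat x y : 0 < x -> x <= y -> ln x <= ln y.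
Proof. intros Hx [H| ->]; [left; now apply ln_increasing|lra]. Qed.

Lemma exp_root4_log_le (k n : nat) : (2 <= k)%nat -> (1 <= n)%nat -> (n <= k ^ 4)%nat ->
  exp (Rpower (INR n) (1 / 4) * ln (INR n) / 100) <= INR ((k + 1) ^ (k - 1)).
Proof.
  intros Hk Hn Hnk.
  assert (Hk' : 2 <= INR k) by (apply (le_INR 2); auto).
  assert (Hn' : 1 <= INR n) by (apply (le_INR 1); auto).
  assert (Hnk' : INR n <= INR k ^ 4) by (rewrite <- pow_INR; apply le_INR; auto).
  assert (Hln_n : 0 <= ln (INR n)) by (rewrite <- ln_1; apply ln_le_compat; lra).
  assert (Hln_k : 0 <= ln (INR k)) by (rewrite <- ln_1; apply ln_le_compat; lra).
  assert (Hln : ln (INR n) <= 4 * ln (INR k)).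
  { replace 4 with (INR 4) by (simpl; ring). rewrite <- ln_pow by lra. apply ln_le_compat; lra. }
  assert (Hln_k1 : ln (INR k) <= ln (INR (k + 1))) by (apply ln_le_compat; [lra|apply le_INR; lia]).
  assert (Hroot : Rpower (INR n) (1 / 4) <= INR k).
  { unfold Rpower. rewrite <- (exp_ln (INR k)) by lra. apply exp_le_compat. lra. }
  assert (Hroot0 : 0 < Rpower (INR n) (1 / 4)) by apply exp_pos.
  assert (Hk1 : INR (k - 1) = INR k - 1) by (rewrite minus_INR by lia; simpl; ring).
  rewrite pow_INR, <- (exp_ln (INR (k + 1) ^ (k - 1))) by (apply pow_lt, lt_0_INR; lia).
  apply exp_le_compat. rewrite ln_pow, Hk1 by (apply lt_0_INR; lia).
  assert (Rpower (INR n) (1 / 4) * ln (INR n) <= INR k * (4 * ln (INR k)))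
    by (apply Rmult_le_compat; lra).
  assert ((INR k - 1) * ln (INR k) <= (INR k - 1) * ln (INR (k + 1)))
    by (apply Rmult_le_compat_l; lra).
  nra.
Qed.

Theorem theorem1p1 :
  exists c : R, 0 < c /\
    forall N : nat, exists n : nat, (N <= n)%nat /\
      exists (adj : nat -> nat -> bool) (a b : nat),
        simple_graph n adj /\ connected n adj /\ (a < n)%nat /\ (b < n)%nat /\
        forall gp : nat -> list nat, geodesic_system n adj b gp ->
          exists E : R,
            expected_hitting_time n adj b (fun x => Nat.eqb x a) gp a E /\
            E >= c * exp (Rpower (INR n) (1/4) * ln (INR n) / 100).
Proof.
  exists (1 / 4). split; [lra|]. intros N.
  set (k := (N + 2)%nat). assert (Hk : (2 <= k)%nat) by lia.
  pose proof (spine_lt_size k Hk) as Hsize.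
  exists (trap_size k). split; [lia|].
  exists (trap k), k, 0%nat.
  split; [now apply trap_simple|]. split; [now apply trap_connected|]. split; [lia|]. split; [lia|].
  intros gp Hgp. destruct (trap_hitting_time_ge k Hk gp Hgp) as [E [HE HEge]].
  exists E. split; [exact HE|].
  pose proof (exp_root4_log_le k (trap_size k) Hk ltac:(lia) (trap_size_le k Hk)). lra.
Qed.
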